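(* Let $V$ be a Seifert matrix and let $\omega,\omega'$ be unit complex numbers that are roots of the same irreducible polynomial over $\mathbb{Q}$. Then $\sigma_\omega(V)\equiv\sigma_{\omega'}(V)\pmod 2$. In particular, if $\omega_p\in S$ is a root of an irreducible rational polynomial having another root $\omega\in S$, no Seifert matrix $V$ (metabolic or not) can have $\sigma_{\omega_p}(V)$ odd while $\sigma_{\omega}(V)=0$.
   Context: A Seifert matrix is a square integral matrix $V$ with $\det(V-V^T)=\pm1$; for a unit complex number $\omega$, $\sigma_\omega(V)$ is the signature of the Hermitian matrix $(1-\omega)V+(1-\bar\omega)V^T$. $S$ is the set of unit complex numbers with positive imaginary part. *)

From HB Require Import structures.
From mathcomp Require Import all_boot all_order all_algebra all_field.
Set Implicit Arguments. Unset Strict Implicit. Unset Printing Implicit Defensive.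
Import Order.TTheory GRing.Theory Num.Theory.
Local Open Scope ring_scope.

(* Complex numbers are modelled by algC (algebraic complex numbers); every
   number considered in the theorem is a root of a nonzero rational
   polynomial, hence algebraic. *)

Definition eigenvalues (C : closedFieldType) (n : nat) (A : 'M[C]_n) : seq C :=
  sval (closed_field_poly_normal (char_poly A)).

Definition signature (n : nat) (A : 'M[algC]_n) : int :=
  (count (fun x : algC => 0 < x) (eigenvalues A))%:Z
  - (count (fun x : algC => x < 0) (eigenvalues A))%:Z.

Definition seifert_matrix (n : nat) (V : 'M[int]_n) : Prop :=
  \det (V - V^T) = 1 \/ \det (V - V^T) = -1.

Definition sigma_omega (n : nat) (w : algC) (V : 'M[int]_n) : int :=
  let VC := map_mx (fun z : int => z%:~R : algC) V in
  signature ((1 - w) *: VC + (1 - w^*) *: VC^T).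

Definition in_S (w : algC) : Prop := `|w| = 1 /\ 0 < 'Im w.

From HB Require Import structures.
From mathcomp Require Import all_boot all_order all_algebra all_field.
From mathcomp Require Import zify ring.

Set Implicit Arguments.
Unset Strict Implicit.
Unset Printing Implicit Defensive.
Import Order.TTheory GRing.Theory Num.Theory.
Local Open Scope ring_scope.

(* The signature of a Hermitian matrix has the parity of its rank, since the
   nonzero eigenvalues are real.  For |w| = 1 and w <> 1 the Hermitian form
   (1 - w) V + (1 - w^* ) V^T is a nonzero multiple of A(w) = w V - V^T, the
   Alexander matrix evaluated at w.  The rank of A(w) is the size of its
   largest nonvanishing minor, and whether a minor of A vanishes at w only
   depends on the minimal polynomial of w over Q. *)

Section RankMinors.

Variable F : fieldType.

Lemma rank_diag_mx n (d : 'rV[F]_n) :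
  \rank (diag_mx d) = #|[pred i | d ord0 i != 0]|.
Proof.
rewrite -sum1_card big_mkcond /=.
elim: n d => [|n IH] d; first by rewrite big_ord0 flatmx0 mxrank0.
have := rank_diag_block_mx (diag_mx (lsubmx (d : 'rV_(1 + n))))
                           (diag_mx (rsubmx (d : 'rV_(1 + n)))).
rewrite -diag_mx_row hsubmxK IH => ->.
rewrite big_ord_recl !inE; congr addn.
  have -> : diag_mx (lsubmx (d : 'rV_(1 + n))) = (d ord0 ord0)%:M.
    apply/matrixP => i j; rewrite !ord1 !mxE.
    by congr (d _ _ *+ _); apply: val_inj.
  have [->|d0] := eqVneq (d ord0 ord0) 0; first by rewrite raddf0 mxrank0.
  by rewrite -scalemx1 mxrank_scale_nz ?mxrank1.
apply: eq_bigr => i _; rewrite !inE mxE.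
by congr (if d _ _ != _ then _ else _); apply: val_inj.
Qed.

Lemma char_poly_similar n (P A : 'M[F]_n) : P \in unitmx ->
  char_poly (invmx P *m A *m P) = char_poly A.
Proof.
move=> Pu; rewrite /char_poly /char_poly_mx.
have -> : 'X%:M - map_mx polyC (invmx P *m A *m P) =
    map_mx polyC (invmx P) *m ('X%:M - map_mx polyC A) *m map_mx polyC P.
  rewrite !map_mxM mulmxBr mulmxBl mul_mx_scalar; congr (_ - _).
  by rewrite -scalemxAl -map_mxM mulVmx // map_mx1 scalemx1.
rewrite !det_mulmx mulrAC !det_map_mx -rmorphM -det_mulmx mulVmx //.
by rewrite det1 mul1r.
Qed.

Lemma exists_rank_minor_neq0 m n (A : 'M[F]_(m, n)) :
  exists (f : 'I_(\rank A) -> 'I_m) (g : 'I_(\rank A) -> 'I_n),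
    \det (mxsub f g A) != 0.
Proof.
pose f := maxrankfun A.
have fullT : row_full (rowsub f A)^T.
  by rewrite /row_full mxrank_tr; exact: maxrowsub_free.
exists f, (fullrankfun fullT).
have := fullrowsub_unit fullT; rewrite unitmxE unitfE.
have -> : rowsub (fullrankfun fullT) (rowsub f A)^T =
          (mxsub f (fullrankfun fullT) A)^T by apply/matrixP => i j; rewrite !mxE.
by rewrite det_tr.
Qed.

Lemma mxrank_mxsub m n m' n' (f : 'I_m' -> 'I_m) (g : 'I_n' -> 'I_n)
    (A : 'M[F]_(m, n)) :
  (\rank (mxsub f g A) <= \rank A)%N.
Proof.
rewrite mxsubrc rowsubE -[X in colsub _ X]mulmx1 -mulmx_colsub.
exact: leq_trans (mxrankM_maxr _ _) (mxrankM_maxl _ _).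
Qed.

Lemma eq_mxrank_minors m n (A B : 'M[F]_(m, n)) :
  (forall k (f : 'I_k -> 'I_m) (g : 'I_k -> 'I_n),
      (\det (mxsub f g A) == 0) = (\det (mxsub f g B) == 0)) ->
  \rank A = \rank B.
Proof.
suff le_rank (A1 A2 : 'M[F]_(m, n)) :
    (forall k (f : 'I_k -> 'I_m) (g : 'I_k -> 'I_n),
        (\det (mxsub f g A1) == 0) = (\det (mxsub f g A2) == 0)) ->
    (\rank A1 <= \rank A2)%N.
  by move=> eqAB; apply/eqP; rewrite eqn_leq !le_rank // => k f g; rewrite eqAB.
move=> eqA12; have [f [g]] := exists_rank_minor_neq0 A1; rewrite eqA12 => minor_nz.
have /mxrank_unit <- : mxsub f g A2 \in unitmx by rewrite unitmxE unitfE.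
exact: mxrank_mxsub.
Qed.

End RankMinors.

Section Signature.

Variable C : numClosedFieldType.

Lemma count_neq0_real (s : seq C) : all (mem Num.real) s ->
  count (fun x : C => x != 0) s =
    (count (fun x : C => (0 < x)%R) s + count (fun x : C => (x < 0)%R) s)%N.
Proof.
elim: s => [|x s IH] //= /andP[xr /IH ->].
by case: (real_ltgtP xr (real0 C)); rewrite /= ?add0n ?add1n ?addnS ?addSn.
Qed.

Lemma eigenvalues_normalmx n (A : 'M[C]_n) : A \is normalmx ->
  perm_eq (eigenvalues A) [seq spectral_diag A ord0 i | i <- enum 'I_n].
Proof.
move/orthomx_spectralP => AE.
have charA : char_poly A = \prod_(i < n) ('X - (spectral_diag A ord0 i)%:P).
  rewrite {1}AE char_poly_similar ?spectral_unit // char_poly_trig ?diag_mx_is_trig //.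
  by apply: eq_bigr => i _; rewrite mxE eqxx mulr1n.
apply: prod_XsubC_eq; rewrite big_map big_enum /= -charA.
rewrite /eigenvalues; case: closed_field_poly_normal => r /= ->.
by rewrite (monicP (char_poly_monic A)) scale1r.
Qed.

Lemma mxrank_normalmx n (A : 'M[C]_n) : A \is normalmx ->
  \rank A = #|[pred i | spectral_diag A ord0 i != 0]|.
Proof.
move/orthomx_spectralP => AE.
have Pu : spectralmx A \in unitmx := spectral_unit A.
rewrite {1}AE mxrankMfree ?row_free_unit //.
by rewrite (eqmxMfull _ _) ?row_full_unit ?unitmx_inv // rank_diag_mx.
Qed.

End Signature.

Lemma signature_mxrank_mod2 n (H : 'M[algC]_n) : H \is hermsymmx ->
  (signature H = (\rank H)%:Z %[mod 2])%Z.
Proof.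
move=> Hherm; have Hnormal := hermitian_normalmx Hherm.
have eigH := eigenvalues_normalmx Hnormal.
have real_eigH : all (mem Num.real) (eigenvalues H).
  rewrite (perm_all _ eigH); apply/allP => x /mapP[i _ ->].
  by have /mxOverP := hermitian_spectral_diag_real Hherm; apply.
have rankH : \rank H = count (fun x => x != 0) (eigenvalues H).
  by rewrite mxrank_normalmx // (permP eigH) count_map -size_filter cardE enumT.
rewrite /signature rankH count_neq0_real // PoszD.
set a := count _ _; set b := count _ _.
by rewrite -(modzMDl b (a%:Z - b%:Z) 2); congr (_ %% _)%Z; lia.
Qed.

Definition commr_ratr (z : algC) : commr_rmorph ratr z := fun a => mulrC _ _.

Section Conjugates.

Variables (p : {poly rat}) (x y : algC).
Hypotheses (p_irr : irreducible_poly p)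
  (px : root (map_poly ratr p) x) (py : root (map_poly ratr p) y).

Lemma irreducible_root_dvdp (z : algC) : root (map_poly ratr p) z ->
  forall q : {poly rat}, root (map_poly ratr q) z = (p %| q).
Proof.
move=> pz q; have [pmin _ minP] := minCpolyP z.
have pmin_nconst : size pmin != 1.
  by have := minP 1; rewrite rmorph1 dvdp1 => <-; exact: root1.
have pmin_p : pmin %= p by case: p_irr => _; apply => //; rewrite -minP.
by rewrite minP (eqp_dvdl _ pmin_p).
Qed.

Lemma root_conjugate (q : {poly rat}) :
  root (map_poly ratr q) x = root (map_poly ratr q) y.
Proof. by rewrite (irreducible_root_dvdp px) (irreducible_root_dvdp py). Qed.

Lemma mxrank_horner_conjugate m n (A : 'M[{poly rat}]_(m, n)) :
  \rank (map_mx (horner_morph (commr_ratr x)) A) =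
  \rank (map_mx (horner_morph (commr_ratr y)) A).
Proof.
apply: eq_mxrank_minors => k f g; rewrite -!map_mxsub !det_map_mx.
exact: root_conjugate.
Qed.

End Conjugates.

Definition seifert_form n (V : 'M[int]_n) (w : algC) : 'M[algC]_n :=
  let VC := map_mx (fun z : int => z%:~R : algC) V in
  (1 - w) *: VC + (1 - w^*) *: VC^T.

Definition alexander_mx n (V : 'M[int]_n) : 'M[{poly rat}]_n :=
  \matrix_(i, j) ('X * (V i j)%:~R%:P - (V j i)%:~R%:P).

Lemma seifert_form_herm n (V : 'M[int]_n) w : seifert_form V w \is hermsymmx.
Proof.
apply/is_hermitianmxP; rewrite expr0 scale1r.
apply/matrixP => i j; rewrite !mxE.
by rewrite rmorphD !rmorphM /= !rmorphB /= rmorph1 conjCK !rmorph_int addrC.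
Qed.

Lemma seifert_form_alexander n (V : 'M[int]_n) w : `|w| = 1 ->
  seifert_form V w =
  ((1 - w) / w) *: map_mx (horner_morph (commr_ratr w)) (alexander_mx V).
Proof.
move=> w_unit; have w0 : w != 0 by rewrite -normr_eq0 w_unit oner_eq0.
have wV : w^* = w^-1 by rewrite invC_norm w_unit expr1n invr1 mul1r.
apply/matrixP => i j; rewrite !mxE wV rmorphB rmorphM /= horner_morphX.
by rewrite !horner_morphC !rmorph_int; field.
Qed.

Lemma sigma_omega_conjugate_mod2 n (V : 'M[int]_n) (w w' : algC) (p : {poly rat}) :
  `|w| = 1 -> `|w'| = 1 -> irreducible_poly p ->
  root (map_poly ratr p) w -> root (map_poly ratr p) w' ->
  (sigma_omega w V = sigma_omega w' V %[mod 2])%Z.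
Proof.
move=> w_unit w'_unit p_irr pw pw'.
have root_XsubC1 (z : algC) : root (map_poly ratr ('X - 1)) z = (z == 1).
  by rewrite rmorphB /= map_polyX rmorph1 root_XsubC.
have w1E := root_conjugate p_irr pw pw' ('X - 1).
rewrite !root_XsubC1 in w1E.
have [w1|w_neq1] := eqVneq w 1; first by move: w1E; rewrite w1 eqxx => /esym/eqP->.
have w'_neq1 : w' != 1 by rewrite -w1E.
have rank_form (z : algC) : `|z| = 1 -> z != 1 -> \rank (seifert_form V z) =
    \rank (map_mx (horner_morph (commr_ratr z)) (alexander_mx V)).
  move=> z_unit z_neq1; rewrite seifert_form_alexander // mxrank_scale_nz //.
  have z0 : z != 0 by rewrite -normr_eq0 z_unit oner_eq0.
  by rewrite mulf_neq0 ?invr_eq0 // subr_eq0 eq_sym.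
rewrite /sigma_omega -/(seifert_form V w) -/(seifert_form V w').
rewrite !signature_mxrank_mod2 ?seifert_form_herm // !rank_form //.
by rewrite (mxrank_horner_conjugate p_irr pw pw').
Qed.

Theorem mainTheorem8 :
  (forall (n : nat) (V : 'M[int]_n) (w w' : algC) (p : {poly rat}),
      seifert_matrix V ->
      `|w| = 1 -> `|w'| = 1 ->
      irreducible_poly p ->
      root (map_poly ratr p) w -> root (map_poly ratr p) w' ->
      (sigma_omega w V = sigma_omega w' V %[mod 2])%Z)
  /\
  (forall (wp w : algC) (p : {poly rat}),
      in_S wp -> in_S w -> w != wp ->
      irreducible_poly p ->
      root (map_poly ratr p) wp -> root (map_poly ratr p) w ->
      forall (n : nat) (V : 'M[int]_n),
        seifert_matrix V ->
        ~ (~~ (2 %| sigma_omega wp V)%Z /\ sigma_omega w V = 0)).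
Proof.
split=> [n V w w' p _|wp w p [wp_unit _] [w_unit _] _ p_irr pwp pw n V _ [odd_wp w0]].
  exact: sigma_omega_conjugate_mod2.
have := sigma_omega_conjugate_mod2 V wp_unit w_unit p_irr pwp pw.
by rewrite w0 mod0z => /dvdz_mod0P; apply/negP.
Qed.
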